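(* Let $k$ be a finite field, $r\ge2$, and $n\in\mathbb{N}$ with $n\le r$. For elements $b_1,\dots,b_n\in F_r$, the formula $\varphi(x_1,\dots,x_n)\equiv\bigwedge_{(\alpha_1,\dots,\alpha_n)\in k^n\setminus\{0\}}\neg\mathrm{Fit}(\alpha_1x_1+\dots+\alpha_nx_n)$, where $\mathrm{Fit}(x)\equiv\forall y\,(xyx=0)$, holds on $(b_1,\dots,b_n)$ in $F_r$ if and only if $b_1,\dots,b_n$ are linearly independent modulo $\mathrm{Fit}(F_r)$.
   Context: $F_r$ is the free metabelian Lie algebra over $k$ of rank $r$; products are left-normed; $\mathrm{Fit}(F_r)$ is its Fitting radical (sum of all nilpotent ideals), which equals the derived algebra $F_r^2$. *)

From HB Require Import structures.
From mathcomp Require Import all_boot all_order all_algebra.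
Set Implicit Arguments. Unset Strict Implicit. Unset Printing Implicit Defensive.
Import GRing.Theory.
Local Open Scope ring_scope.

Record LieAlg (k : fieldType) := {
  lie_carrier :> lmodType k;
  lie_br : lie_carrier -> lie_carrier -> lie_carrier;
  lie_brDl : forall x y z, lie_br (x + y) z = lie_br x z + lie_br y z;
  lie_brDr : forall x y z, lie_br x (y + z) = lie_br x y + lie_br x z;
  lie_brZl : forall (a : k) x y, lie_br (a *: x) y = a *: lie_br x y;
  lie_brZr : forall (a : k) x y, lie_br x (a *: y) = a *: lie_br x y;
  lie_br_alt : forall x, lie_br x x = 0;
  lie_jacobi : forall x y z,
    lie_br x (lie_br y z) + lie_br y (lie_br z x) + lie_br z (lie_br x y) = 0
}.

Arguments lie_br {k} l x y : rename.

Definition metabelian (k : fieldType) (L : LieAlg k) : Prop :=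
  forall a b c d : L, lie_br L (lie_br L a b) (lie_br L c d) = 0.

Definition lie_hom (k : fieldType) (L M : LieAlg k) (f : L -> M) : Prop :=
  [/\ forall x y : L, f (x + y) = f x + f y,
      forall (a : k) (x : L), f (a *: x) = a *: f x &
      forall x y : L, f (lie_br L x y) = lie_br M (f x) (f y)].

Definition is_free_metabelian (k : fieldType) (r : nat) (L : LieAlg k)
    (x : 'I_r -> L) : Prop :=
  metabelian L /\
  forall (M : LieAlg k), metabelian M -> forall m : 'I_r -> M,
    exists f : L -> M,
      [/\ lie_hom f, (forall i, f (x i) = m i) &
          forall g : L -> M, lie_hom g -> (forall i, g (x i) = m i) ->
            forall z, g z = f z].

Definition lnprod (k : fieldType) (L : LieAlg k) (x0 : L) (s : seq L) : L :=
  foldl (lie_br L) x0 s.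

Definition is_ideal (k : fieldType) (L : LieAlg k) (I : L -> Prop) : Prop :=
  [/\ I 0,
      forall x y, I x -> I y -> I (x + y),
      forall (a : k) x, I x -> I (a *: x) &
      forall x y, I x -> I (lie_br L x y)].

(* nilpotent ideal: some power I^c (spanned by left-normed products of
   c elements of I) vanishes *)
Definition nilpotent_ideal (k : fieldType) (L : LieAlg k) (I : L -> Prop) : Prop :=
  is_ideal I /\
  exists c : nat, forall (x0 : L) (s : seq L),
    size s = c -> I x0 -> (forall y, y \in s -> I y) -> lnprod x0 s = 0.

(* Fitting radical: the sum of all nilpotent ideals, i.e. the set of finite
   sums of elements each lying in some nilpotent ideal. *)
Definition Fit (k : fieldType) (L : LieAlg k) (z : L) : Prop :=
  exists s : seq L,
    (forall y, y \in s -> exists I : L -> Prop, nilpotent_ideal I /\ I y) /\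
    z = \sum_(y <- s) y.

Definition lin_indep_mod (k : fieldType) (L : LieAlg k) (S : L -> Prop)
    (n : nat) (b : 'I_n -> L) : Prop :=
  forall alpha : 'I_n -> k, S (\sum_(i < n) alpha i *: b i) ->
    forall i, alpha i = 0.

(* the first-order formula Fit(x) == forall y, x y x = 0 (left-normed) *)
Definition Fit_formula (k : fieldType) (L : LieAlg k) (x : L) : Prop :=
  forall y : L, lie_br L (lie_br L x y) x = 0.

Definition phi_formula (k : fieldType) (L : LieAlg k) (n : nat)
    (b : 'I_n -> L) : Prop :=
  forall alpha : 'I_n -> k, (exists i, alpha i != 0) ->
    ~ Fit_formula (\sum_(i < n) alpha i *: b i).

(** The derived algebra [L'] of a metabelian Lie algebra is an abelian, hence
    nilpotent, ideal, and [Fit(z)] holds on it.  In the free metabelian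
    algebra [L] of rank [r >= 2] on [x_1..x_r], every element is
    [sum c_i x_i + d] with [d] in [L'].  If some [c_j <> 0], map [x_j] to
    [(1,0)] and the other generators to [(0,1)] in the two-dimensional
    nonabelian Lie algebra: there [ad] of the image of [z] acts as a nonzero
    scalar on the derived line, so no bracket [z w z ... z] vanishes
    identically.  Hence both the Fitting radical and the set defined by
    [Fit(x)] are exactly [L'], and [phi] expresses linear independence
    modulo [L']. *)
From HB Require Import structures.
From mathcomp Require Import all_boot all_order all_algebra all_field.
From mathcomp Require Import ring boolp.
Set Implicit Arguments. Unset Strict Implicit. Unset Printing Implicit Defensive.
Import GRing.Theory.
Local Open Scope ring_scope.

Section Derived.
Variables (k : fieldType) (L : LieAlg k).
Local Notation br := (lie_br L).

Lemma lie_br0l y : br 0 y = 0.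
Proof. by have := @lie_brZl _ L 0 0 y; rewrite !scale0r. Qed.

Lemma lie_br0r y : br y 0 = 0.
Proof. by have := @lie_brZr _ L 0 y 0; rewrite !scale0r. Qed.

Lemma lie_br_suml (I : Type) (s : seq I) (F : I -> L) y :
  br (\sum_(i <- s) F i) y = \sum_(i <- s) br (F i) y.
Proof.
elim: s => [|a s IHs]; first by rewrite !big_nil lie_br0l.
by rewrite !big_cons lie_brDl IHs.
Qed.

Lemma lie_br_sumr (I : Type) (s : seq I) (F : I -> L) y :
  br y (\sum_(i <- s) F i) = \sum_(i <- s) br y (F i).
Proof.
elim: s => [|a s IHs]; first by rewrite !big_nil lie_br0r.
by rewrite !big_cons lie_brDr IHs.
Qed.

Definition derived (z : L) : Prop :=
  exists s : seq (L * L), z = \sum_(p <- s) br p.1 p.2.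

Lemma derived0 : derived 0.
Proof. by exists [::]; rewrite big_nil. Qed.

Lemma derivedD u v : derived u -> derived v -> derived (u + v).
Proof. by move=> [s ->] [t ->]; exists (s ++ t); rewrite big_cat. Qed.

Lemma derivedZ a u : derived u -> derived (a *: u).
Proof.
move=> [s ->]; exists [seq (a *: p.1, p.2) | p <- s].
by rewrite big_map scaler_sumr; apply: eq_bigr => p _; rewrite lie_brZl.
Qed.

Lemma derived_br u v : derived (br u v).
Proof. by exists [:: (u, v)]; rewrite big_seq1. Qed.

Lemma derived_sum (s : seq L) :
  (forall y, y \in s -> derived y) -> derived (\sum_(y <- s) y).
Proof. by move=> s_der; rewrite big_seq; apply: big_ind; [exact: derived0 | exact: derivedD |]. Qed.

Hypothesis L_metabelian : metabelian L.

Lemma derived_br_eq0 u v : derived u -> derived v -> br u v = 0.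
Proof.
move=> [s ->] [t ->]; rewrite lie_br_suml big1 // => p _.
by rewrite lie_br_sumr big1 // => q _; exact: L_metabelian.
Qed.

Lemma derived_nilpotent_ideal : nilpotent_ideal derived.
Proof.
split; first by split=> [||a u|u v _]; [exact: derived0 | exact: derivedD
  | exact: derivedZ | exact: derived_br].
exists 1%N => x0 [|y [|]] // _ x0_der s_der.
by apply: derived_br_eq0 => //; apply: s_der; rewrite mem_head.
Qed.

Lemma derived_Fit z : derived z -> Fit z.
Proof.
move=> z_der; exists [:: z]; rewrite big_seq1; split=> // y.
by rewrite inE => /eqP ->; exists derived; split=> //; exact: derived_nilpotent_ideal.
Qed.

Lemma derived_Fit_formula z : derived z -> Fit_formula z.
Proof. by move=> z_der y; apply: derived_br_eq0 => //; exact: derived_br. Qed.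

End Derived.

Section LieHom.
Variables (k : fieldType) (L M : LieAlg k) (f : L -> M).
Hypothesis f_hom : lie_hom f.

Lemma lie_homD u v : f (u + v) = f u + f v.
Proof. by case: f_hom. Qed.

Lemma lie_homZ a u : f (a *: u) = a *: f u.
Proof. by case: f_hom. Qed.

Lemma lie_hom_br u v : f (lie_br L u v) = lie_br M (f u) (f v).
Proof. by case: f_hom. Qed.

Lemma lie_hom0 : f 0 = 0.
Proof. by rewrite -(scale0r (0 : L)) lie_homZ scale0r. Qed.

Lemma lie_hom_sum (I : Type) (s : seq I) (F : I -> L) :
  f (\sum_(i <- s) F i) = \sum_(i <- s) f (F i).
Proof.
elim: s => [|a s IHs]; first by rewrite !big_nil lie_hom0.
by rewrite !big_cons lie_homD IHs.
Qed.

Lemma lie_hom_derived z : derived z -> derived (f z).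
Proof.
move=> [s ->]; exists [seq (f p.1, f p.2) | p <- s].
by rewrite lie_hom_sum big_map; apply: eq_bigr => p _; rewrite lie_hom_br.
Qed.

Lemma lie_hom_lnprod x0 (s : seq L) : f (lnprod x0 s) = lnprod (f x0) (map f s).
Proof. by elim: s x0 => [|a s IHs] x0 //=; rewrite /lnprod /= IHs lie_hom_br. Qed.

End LieHom.

Section Generation.
Variables (k : fieldType) (L : LieAlg k) (r : nat) (x : 'I_r -> L).

Definition gen_span (z : L) : Prop :=
  exists c : 'I_r -> k, exists2 d, derived d & z = \sum_(i < r) c i *: x i + d.

Lemma gen_span0 : gen_span 0.
Proof.
exists (fun=> 0), 0; first exact: derived0.
by rewrite addr0 big1 // => i _; rewrite scale0r.
Qed.

Lemma gen_span_lin a u v : gen_span u -> gen_span v -> gen_span (a *: u + v).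
Proof.
move=> [c [d d_der ->]] [c' [d' d'_der ->]].
exists (fun i => a * c i + c' i), (a *: d + d').
  by apply: derivedD => //; exact: derivedZ.
rewrite scalerDr scaler_sumr addrACA -big_split /=.
by congr (_ + _); apply: eq_bigr => i _; rewrite scalerA scalerDl.
Qed.

Lemma gen_span_br u v : gen_span (lie_br L u v).
Proof.
exists (fun=> 0), (lie_br L u v); first exact: derived_br.
by rewrite big1 ?add0r // => i _; rewrite scale0r.
Qed.

Lemma gen_span_gen j : gen_span (x j).
Proof.
exists (fun i => (i == j)%:R), 0; first exact: derived0.
rewrite addr0 (bigD1 j) //= eqxx scale1r big1 ?addr0 // => i /negbTE ->.
by rewrite scale0r.
Qed.

(* [gen_span] is undecidable, but subtypes of [L] need a boolean predicate. *)
Definition gen_spanb (z : L) : bool := `[< gen_span z >].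

Lemma gen_spanb_closed : GRing.subsemimod_closed gen_spanb.
Proof.
apply: GRing.submod_closed_semi; split; first exact: asboolT gen_span0.
by move=> a u v /asboolP u_span /asboolP v_span; apply: asboolT; exact: gen_span_lin.
Qed.

HB.instance Definition _ := GRing.isSubmodClosed.Build k L gen_spanb gen_spanb_closed.

Record gen_sub := GenSub { gen_val :> L; gen_valP : gen_spanb gen_val }.

HB.instance Definition _ := [isSub for gen_val].
HB.instance Definition _ := [Choice of gen_sub by <:].
HB.instance Definition _ := [SubChoice_isSubLmodule of gen_sub by <:].

Definition gen_sub_br (u v : gen_sub) : gen_sub :=
  GenSub (asboolT (gen_span_br u v)).

Definition gen_sub_lie : LieAlg k.
Proof.
refine (@Build_LieAlg k gen_sub gen_sub_br _ _ _ _ _ _) => *; apply: val_inj.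
- exact: lie_brDl.
- exact: lie_brDr.
- exact: lie_brZl.
- exact: lie_brZr.
- exact: lie_br_alt.
- exact: lie_jacobi.
Defined.

Lemma gen_sub_metabelian : metabelian L -> metabelian gen_sub_lie.
Proof. by move=> L_meta a b c d; apply: val_inj; exact: L_meta. Qed.

Lemma free_metabelian_gen_span : is_free_metabelian x -> forall z, gen_span z.
Proof.
move=> [L_meta L_free] z.
have [f [f_hom f_gen _]] := L_free _ (gen_sub_metabelian L_meta)
  (fun i => GenSub (asboolT (gen_span_gen i))).
have [? [_ _ L_uniq]] := L_free L L_meta x.
have val_f_hom : lie_hom (fun u => gen_val (f u)).
  by split=> [u v|a u|u v]; rewrite ?(lie_homD f_hom) ?(lie_homZ f_hom) ?(lie_hom_br f_hom).
have id_hom : lie_hom (@id L) by [].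
have z_eq : gen_val (f z) = z.
  rewrite [RHS](L_uniq _ id_hom (fun=> erefl)).
  by rewrite (L_uniq _ val_f_hom) // => i; rewrite f_gen.
by rewrite -[X in gen_span X]z_eq; exact/asboolP/gen_valP.
Qed.

End Generation.

Lemma fst_sum (U V : nmodType) (I : Type) (s : seq I) (F : I -> U * V) :
  (\sum_(i <- s) F i).1 = \sum_(i <- s) (F i).1.
Proof. by elim/big_rec2: _ => // i a b _ <-. Qed.

Section AffineLieAlgebra.
Variable k : fieldType.

(* The Lie algebra of the affine group of the line, with basis (1,0), (0,1)
   and [(1,0), (0,1)] = (0,1). *)
Definition aff_br (u v : k^o * k^o) : k^o * k^o :=
  (0, (u.1 : k) * (v.2 : k) - (v.1 : k) * (u.2 : k)).

Definition aff_lie : LieAlg k.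
Proof.
refine (@Build_LieAlg k (k^o * k^o)%type aff_br _ _ _ _ _ _) => * /=;
  rewrite /aff_br; congr pair; rewrite /= ?scaler0 ?addr0 // /GRing.scale /=; ring.
Defined.

Lemma aff_lie_metabelian : metabelian aff_lie.
Proof. by move=> *; rewrite /= /aff_br /= !mul0r subrr. Qed.

Lemma aff_derived_fst (d : aff_lie) : derived d -> d.1 = 0.
Proof. by move=> [s ->]; rewrite fst_sum big1. Qed.

Lemma aff_lnprod_nseq (a p : k) (u : aff_lie) m :
  u.1 = a -> lnprod ((0, p) : aff_lie) (nseq m u) = (0, (- a) ^+ m * p).
Proof.
move=> u1; elim: m p => [|m IHm] p; first by rewrite mul1r.
have br_u : aff_br (0, p) u = (0, - a * p) by rewrite /aff_br /= u1 mul0r sub0r mulNr.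
by rewrite -[LHS]/(lnprod (L := aff_lie) (aff_br (0, p) u) (nseq m u)) br_u IHm exprSr mulrA.
Qed.

End AffineLieAlgebra.

Section FreeMetabelian.
Variables (k : fieldType) (L : LieAlg k) (r : nat) (x : 'I_r -> L).
Hypotheses (r_ge2 : (2 <= r)%N) (x_free : is_free_metabelian x).

Lemma free_metabelian_derived_of_lnprod_eq0 (z : L) m :
  (forall w, lnprod (lie_br L z w) (nseq m z) = 0) -> derived z.
Proof.
have [c [d d_der z_eq]] := free_metabelian_gen_span x_free z.
have [/existsP [j cj_neq0] | /existsPn c_eq0] := boolP [exists j, c j != 0]; last first.
  move=> _; rewrite z_eq big1 ?add0r // => i _.
  by move/negPn/eqP: (c_eq0 i) => ->; rewrite scale0r.
have [i i_neq_j] : exists i : 'I_r, i != j.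
  have [r0 r1] : (0 < r)%N /\ (1 < r)%N by split; first exact: ltnW.
  have [->|] := eqVneq j (Ordinal r0); last by exists (Ordinal r0); rewrite eq_sym.
  by exists (Ordinal r1).
pose gen_img t : aff_lie k := if t == j then (1, 0) else (0, 1).
have [h [h_hom h_gen _]] := (proj2 x_free) _ (@aff_lie_metabelian k) gen_img.
have h_gen1 t : (h (c t *: x t)).1 = c t * (t == j)%:R.
  by rewrite (lie_homZ h_hom) h_gen /gen_img; case: (t == j).
have hz1 : (h z).1 = c j.
  rewrite z_eq (lie_homD h_hom) (lie_hom_sum h_hom) /= fst_sum.
  rewrite (aff_derived_fst (lie_hom_derived h_hom d_der)) addr0 (bigD1 j) //=.
  rewrite h_gen1 eqxx mulr1 big1 ?addr0 // => t /negbTE t_neq_j.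
  by rewrite h_gen1 t_neq_j mulr0.
move=> /(_ (x i)) /(congr1 h); rewrite (lie_hom_lnprod h_hom) (lie_hom_br h_hom).
rewrite (lie_hom0 h_hom) map_nseq h_gen /gen_img (negbTE i_neq_j) /= {1}/aff_br /= hz1.
rewrite mul0r mulr1 subr0 (aff_lnprod_nseq _ _ hz1) => -[] /eqP.
by rewrite mulf_eq0 expf_eq0 oppr_eq0 (negbTE cj_neq0) andbF.
Qed.

Lemma free_metabelian_Fit_formulaP (z : L) : Fit_formula z <-> derived z.
Proof.
split; last by apply: derived_Fit_formula; case: x_free.
by move=> z_Fit; apply: (@free_metabelian_derived_of_lnprod_eq0 _ 1).
Qed.

Lemma free_metabelian_FitP (z : L) : Fit z <-> derived z.
Proof.
split; last by apply: derived_Fit; case: x_free.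
move=> [s [s_nil ->]]; apply: derived_sum => y /s_nil [I [[[_ _ _ I_br] [m I_nil]] Iy]].
apply: (@free_metabelian_derived_of_lnprod_eq0 _ m) => w.
apply: I_nil; [exact: size_nseq | exact: I_br |].
by move=> y'; rewrite mem_nseq => /andP[_ /eqP ->].
Qed.

End FreeMetabelian.

Theorem lemma3p4 (k : finFieldType) (r : nat) (L : LieAlg k)
  (x : 'I_r -> L) (n : nat) (b : 'I_n -> L) :
  (2 <= r)%N -> (n <= r)%N -> is_free_metabelian x ->
  phi_formula b <-> lin_indep_mod (@Fit k L) b.
Proof.
move=> r_ge2 _ x_free.
have FitE (z : L) : Fit z <-> Fit_formula z.
  exact: iff_trans (free_metabelian_FitP r_ge2 x_free z)
    (iff_sym (free_metabelian_Fit_formulaP r_ge2 x_free z)).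
split=> [phi_b alpha /FitE alpha_Fit i | indep_b alpha [i alpha_i] /FitE alpha_Fit].
- by apply/eqP/negPn/negP => alpha_i; apply: (phi_b alpha); first exists i.
- by move/eqP: (indep_b alpha alpha_Fit i); rewrite (negbTE alpha_i).
Qed.
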